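(* Let $M$ be a finite monoid such that for all $x,y\in M$, either $R(x)\subseteq R(xy)$ or $R(y)\subseteq R(xy)$. Then there exists $k\ge2$ such that $x^k=x$ for all $x\in M$.
   Context: For $m$ in a monoid $M$, $R(m)=\{my: y\in M\}$ is the right ideal of $m$. *)

From mathcomp Require Import all_boot.
Set Implicit Arguments. Unset Strict Implicit. Unset Printing Implicit Defensive.

Definition is_monoid (T : Type) (mul : T -> T -> T) (e : T) : Prop :=
  associative mul /\ left_id e mul /\ right_id e mul.

Definition right_ideal (T : Type) (mul : T -> T -> T) (m : T) : T -> Prop :=
  fun z => exists y : T, z = mul m y.

Definition pincl (T : Type) (A B : T -> Prop) : Prop := forall z, A z -> B z.

Fixpoint mpow (T : Type) (mul : T -> T -> T) (e : T) (x : T) (k : nat) : T :=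
  match k with
  | 0 => e
  | k'.+1 => mul x (mpow mul e x k')
  end.

From mathcomp Require Import all_boot.

Set Implicit Arguments.
Unset Strict Implicit.
Unset Printing Implicit Defensive.

(* Taking y = x in the hypothesis gives R(x) ⊆ R(x^2), i.e. x = x^2 y for
   some y, and hence x = x^(n+1) y^n for every n.  In a finite monoid the
   powers of x are eventually periodic, x^(a+p) = x^a with 0 < p <= |M|;
   then x^(p+1) = x^p x^(a+1) y^a = x^(a+1) y^a = x.  So x^(pj+1) = x for all
   j, and k = |M|! + 1 works uniformly since every such p divides |M|!. *)

Section MonoidPowers.

Variables (T : Type) (mul : T -> T -> T) (e : T).
Hypothesis monoid_mul : is_monoid mul e.

Local Notation "x ^ n" := (mpow mul e x n).

Lemma mpowD x m n : x ^ (m + n) = mul (x ^ m) (x ^ n).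
Proof.
case: monoid_mul => mulA [mul1x _].
by elim: m => [|m IHm] /=; rewrite ?mul1x // IHm mulA.
Qed.

Lemma mpowSr x n : x ^ n.+1 = mul (x ^ n) x.
Proof.
case: monoid_mul => _ [_ mulx1].
by rewrite -addn1 mpowD /= mulx1.
Qed.

Lemma mpow_regular x y : x = mul (mul x x) y ->
  forall n, x = mul (x ^ n.+1) (y ^ n).
Proof.
case: monoid_mul => mulA [_ mulx1] xxy.
elim=> [|n IHn]; first by rewrite /= !mulx1.
have -> : y ^ n.+1 = mul y (y ^ n) by [].
by rewrite !mpowSr !mulA -(mulA _ x x) -(mulA _ _ y) -xxy -mpowSr.
Qed.

Lemma mpow_period_fixed x y a p : x = mul (mul x x) y ->
  x ^ (a + p) = x ^ a -> x ^ p.+1 = x.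
Proof.
case: monoid_mul => mulA _ xxy xap.
have xa := mpow_regular xxy a.
rewrite mpowSr {2}xa mulA -mpowD addnS.
by rewrite mpowSr addnC xap -mpowSr -xa.
Qed.

Lemma mpow_period_fixedM x p j : x ^ p.+1 = x -> x ^ (p * j).+1 = x.
Proof.
case: monoid_mul => _ [_ mulx1] xp.
elim: j => [|j IHj]; first by rewrite muln0 /= mulx1.
by rewrite mulnS -addSn mpowD xp.
Qed.

End MonoidPowers.

Lemma mpow_eventually_periodic (T : finType) (mul : T -> T -> T) (e x : T) :
  exists a p, 0 < p <= #|T| /\ mpow mul e x (a + p) = mpow mul e x a.
Proof.
pose f (i : 'I_#|T|.+1) := mpow mul e x i.
have /injectivePn [i [j neq_ij fij]] : ~~ injectiveb f.
  by apply/injectiveP => /leq_card; rewrite card_ord ltnn.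
wlog lt_ij : i j neq_ij fij / i < j.
  move=> gen; case: (ltngtP i j) => [lt_ij | lt_ji | eq_ij].
  - exact: gen lt_ij.
  - by apply: (gen j i); rewrite 1?eq_sym.
  - by rewrite (val_inj eq_ij) eqxx in neq_ij.
exists i, (j - i); rewrite subnKC ?(ltnW lt_ij) // subn_gt0 lt_ij /=.
by rewrite -ltnS (leq_ltn_trans (leq_subr _ _)).
Qed.

Theorem lemmaB1 (T : finType) (mul : T -> T -> T) (e : T)
  (hM : is_monoid mul e)
  (hR : forall x y : T,
      pincl (right_ideal mul x) (right_ideal mul (mul x y)) \/
      pincl (right_ideal mul y) (right_ideal mul (mul x y))) :
  exists k : nat, 2 <= k /\ forall x : T, mpow mul e x k = x.
Proof.
exists (#|T|`!).+1; split; first by rewrite ltnS fact_gt0.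
move=> x.
have [y xxy] : exists y, x = mul (mul x x) y.
  have xRx : right_ideal mul x x by exists e; case: hM => _ [_ ->].
  by case: (hR x x) => /(_ x xRx).
have [a [p [p_range xap]]] := mpow_eventually_periodic mul e x.
have /dvdnP [j ->] := dvdn_fact p_range.
by rewrite mulnC (mpow_period_fixedM hM) // (mpow_period_fixed hM xxy xap).
Qed.
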